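(* With the notation of the context, suppose there are two sample points $\bm x_\alpha,\bm x_\beta$ such that $$\min_{j\in J_{\geq,\alpha}}u_j(\bm x_\beta)>u^*(\bm x_\beta)=u_\beta(\bm x_\beta).$$ Then there exists a point $\bm x_\gamma\in\mathcal{L}(\bm x_\alpha,\bm x_\beta)=\{\lambda\bm x_\alpha+(1-\lambda)\bm x_\beta:\lambda\in(0,1)\}$ and an affine local piece $u_\gamma$ of $u^*$ with $u^*(\bm x_\gamma)=u_\gamma(\bm x_\gamma)$ such that $$u_\gamma(\bm x_\alpha)\ge u_\alpha(\bm x_\alpha),\qquad u_\gamma(\bm x_\beta)\le u_\beta(\bm x_\beta).$$ Moreover, after adding $(\bm x_\gamma,u_\gamma)$ to the sample set (and recomputing $J_{\geq,\alpha}$ accordingly), $\min_{j\in J_{\geq,\alpha}}u_j(\bm x_\beta)\le u_\beta(\bm x_\beta)$.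
   Context: Let $\Omega\subseteq\mathbb{R}^{n_x}$ be a convex polyhedron and $u^*:\Omega\to\mathbb{R}$ a continuous piecewise affine (PWA) function: $\Omega$ is the union of finitely many closed convex polyhedra (local regions) with pairwise disjoint interiors, and on each local region $u^*$ coincides with an affine function (its local piece). Sample points $\bm x_1,\dots,\bm x_{N_s}\in\Omega$ are given, each lying in the interior of a unique order (UO) region $\Gamma(\bm x_i)$ (a closed polyhedron inside a local region on whose interior the order of all distinct local pieces of $u^*$ is constant), and $u_i$ denotes the local piece of $u^*$ on $\Gamma(\bm x_i)$, so $u_i(\bm x_i)=u^*(\bm x_i)$. Define $J_{\geq,i}=\{j: u_j(\bm x_i)\ge u_i(\bm x_i)\}$, where $j$ ranges over the indices of all current sample points. *)

From mathcomp Require Import all_boot all_order all_algebra.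
Set Implicit Arguments. Unset Strict Implicit. Unset Printing Implicit Defensive.
Import Order.TTheory GRing.Theory Num.Theory.
Local Open Scope ring_scope.

Section PWA.
Variables (R : realFieldType) (n : nat).

Definition dotv (a x : 'rV[R]_n) : R := \sum_(i < n) a 0 i * x 0 i.

(* An affine function x |-> <w,x> + c is represented by the pair (w, c). *)
Definition aff (p : 'rV[R]_n * R) (x : 'rV[R]_n) : R := dotv p.1 x + p.2.

(* A closed convex polyhedron given by finitely many halfspaces <a,x> <= b. *)
Definition in_poly (P : seq ('rV[R]_n * R)) (x : 'rV[R]_n) : bool :=
  all (fun h => dotv h.1 x <= h.2) P.

Definition interior_of (S : 'rV[R]_n -> Prop) (x : 'rV[R]_n) : Prop :=
  exists2 e : R, 0 < e &
    forall y : 'rV[R]_n, (forall i, `|y 0 i - x 0 i| < e) -> S y.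

Definition continuous_on (S : 'rV[R]_n -> Prop) (f : 'rV[R]_n -> R) : Prop :=
  forall x, S x -> forall e : R, 0 < e -> exists2 d : R, 0 < d &
    forall y, S y -> (forall i, `|y 0 i - x 0 i| < d) -> `|f y - f x| < e.

Definition is_PWA (Om : seq ('rV[R]_n * R)) (regions : seq (seq ('rV[R]_n * R)))
    (pieces : seq ('rV[R]_n * R)) (ustar : 'rV[R]_n -> R) : Prop :=
  [/\ size regions = size pieces,
      (forall x, in_poly Om x <->
         exists2 k, (k < size regions)%N & in_poly (nth [::] regions k) x),
      (forall k l, (k < size regions)%N -> (l < size regions)%N -> k <> l ->
         forall x, ~ (interior_of (in_poly (nth [::] regions k)) x /\
                      interior_of (in_poly (nth [::] regions l)) x)),
      continuous_on (in_poly Om) ustar &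
      (forall k, (k < size regions)%N -> forall x,
         in_poly (nth [::] regions k) x -> ustar x = aff (nth (0, 0) pieces k) x)].

(* Gam is a unique order (UO) region contained in the local region k, and
   u is the local piece of ustar on Gam (the piece of region k). *)
Definition UO_region_with_piece (regions : seq (seq ('rV[R]_n * R)))
    (pieces : seq ('rV[R]_n * R)) (Gam : seq ('rV[R]_n * R))
    (u : 'rV[R]_n * R) : Prop :=
  (exists k, [/\ (k < size regions)%N,
       (forall x, in_poly Gam x -> in_poly (nth [::] regions k) x) &
       u = nth (0, 0) pieces k]) /\
  (forall p q, p \in pieces -> q \in pieces -> forall x y,
     interior_of (in_poly Gam) x -> interior_of (in_poly Gam) y ->
     Num.sg (aff p x - aff q x) = Num.sg (aff p y - aff q y)).

Definition Jge (N : nat) (xs : 'I_N -> 'rV[R]_n) (us : 'I_N -> 'rV[R]_n * R)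
    (i : 'I_N) : {set 'I_N} :=
  [set j | aff (us i) (xs i) <= aff (us j) (xs i)].

End PWA.

(* Extending a sample family indexed by 'I_N by a new last element t. *)
Definition ext_fun (T : Type) (N : nat) (f : 'I_N -> T) (t : T) : 'I_N.+1 -> T :=
  fun i => if unlift ord_max i is Some j then f j else t.

(* Let g(t) := ustar (t xa + (1 - t) xb) on [0, 1].  Among t in (0, 1] take one
   maximising the slope (g t - g 0) / t of the chord from (0, g 0); a finite
   candidate set suffices, because between two consecutive parameters where the
   segment crosses a facet hyperplane of some local region, the segment stays in a
   single region and g is affine.  On the last such stretch [p0, lam] ending at the
   maximiser, g follows one local piece u, and maximality of the chord slope forces
   u xb <= g 0 (compare with p0) and u xa >= g 1 (compare with 1).  Finally lam < 1:
   near xa the segment stays in the UO region of xa, where g follows u_alpha, so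
   lam = 1 would make u and u_alpha agree on the whole line, whereas
   u xb <= ustar xb < u_alpha xb. *)
From mathcomp Require Import all_boot all_order all_algebra.
From mathcomp Require Import ring lra.
Set Implicit Arguments. Unset Strict Implicit. Unset Printing Implicit Defensive.
Import Order.TTheory GRing.Theory Num.Theory.
Local Open Scope ring_scope.

Lemma exists_argmax_seq (T : eqType) (d : Order.disp_t) (X : orderType d)
    (s : seq T) (Q : pred T) (f : T -> X) :
  has Q s -> exists2 a, a \in s & Q a /\ (forall b, b \in s -> Q b -> (f b <= f a)%O).
Proof.
elim: s => //= a s IH.
have max_a (b : T) : (forall c, c \in s -> Q c -> (f c <= f b)%O) -> (f b <= f a)%O ->
    forall c, c \in a :: s -> Q c -> (f c <= f a)%O.
  move=> maxb ba c; rewrite inE => /predU1P [-> _ | cs Qc]; first exact: lexx.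
  exact: le_trans (maxb c cs Qc) ba.
case: (boolP (has Q s)) => [/IH [b bs [Qb maxb]] _ | noQ]; last first.
  rewrite orbF => Qa; exists a; rewrite ?mem_head //; split=> // c.
  rewrite inE => /predU1P [-> _ | cs Qc]; first exact: lexx.
  by move/hasPn: noQ => /(_ c cs); rewrite Qc.
case: (boolP (Q a && (f b <= f a)%O)) => [/andP [Qa ba] | not_a].
  by exists a; rewrite ?mem_head //; split=> //; apply: max_a maxb ba.
exists b; first by rewrite inE bs orbT.
split=> // c; rewrite inE => /predU1P [-> Qa | cs Qc]; last exact: maxb.
by move: not_a; rewrite Qa /= -ltNge => /ltW.
Qed.

Lemma affine_nonpos_between (R : realFieldType) (a d t0 t1 s : R) :
  ~ (t0 < - a / d < t1) -> t0 < s < t1 -> a + s * d <= 0 ->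
  forall t, t0 <= t <= t1 -> a + t * d <= 0.
Proof.
move=> no_root /andP [t0s st1] as_le0 t /andP [t0t tt1].
have root_spec : d != 0 -> - a / d * d = - a by move=> d_neq0; rewrite divfK.
have [d_lt0 | d_gt0 | d0] := ltgtP d 0; last by move: as_le0; rewrite d0 !mulr0.
- have at0 : a + t0 * d <= 0.
    rewrite leNgt; apply/negP => at0; apply: no_root.
    have root_eq := root_spec (ltr0_neq0 d_lt0); apply/andP; split; nra.
  nra.
- have at1 : a + t1 * d <= 0.
    rewrite leNgt; apply/negP => at1; apply: no_root.
    have root_eq := root_spec (lt0r_neq0 d_gt0); apply/andP; split; nra.
  nra.
Qed.

Lemma chord_slope_le_intercept (R : realFieldType) (F0 F1 A t0 t1 : R) :
  0 < t0 < t1 ->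
  (t0 * F1 + (1 - t0) * F0 - A) / t0 <= (t1 * F1 + (1 - t1) * F0 - A) / t1 ->
  F0 <= A.
Proof.
move=> /andP [t0_gt0 t0t1]; have t1_gt0 : 0 < t1 by lra.
rewrite ler_pdivrMr // mulrAC ler_pdivlMr //; nra.
Qed.

Lemma chord_slope_end (R : realFieldType) (F0 F1 A G t : R) :
  0 < t <= 1 -> F0 <= A -> G - A <= (t * F1 + (1 - t) * F0 - A) / t -> G <= F1.
Proof. by move=> /andP [t_gt0 t_le1] F0A; rewrite ler_pdivlMr //; nra. Qed.

Section Segment.
Variables (R : realFieldType) (n : nat).
Implicit Types (x y : 'rV[R]_n) (u v : 'rV[R]_n * R) (t : R).

Definition seg x y t : 'rV[R]_n := t *: x + (1 - t) *: y.

Lemma seg1 x y : seg x y 1 = x.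
Proof. by rewrite /seg subrr scale0r addr0 scale1r. Qed.

Lemma seg0 x y : seg x y 0 = y.
Proof. by rewrite /seg subr0 scale0r add0r scale1r. Qed.

Lemma dotv_seg (a : 'rV[R]_n) x y t :
  dotv a (seg x y t) = t * dotv a x + (1 - t) * dotv a y.
Proof.
by rewrite /dotv !mulr_sumr -big_split; apply: eq_bigr => i _; rewrite !mxE /=; ring.
Qed.

Lemma aff_seg u x y t : aff u (seg x y t) = t * aff u x + (1 - t) * aff u y.
Proof. by rewrite /aff dotv_seg; ring. Qed.

Lemma aff_eq_seg u v x y t : t != 1 ->
  aff u (seg x y t) = aff v (seg x y t) -> aff u x = aff v x -> aff u y = aff v y.
Proof.
move=> t_neq1; rewrite !aff_seg => + eq_x; rewrite eq_x => /addrI.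
by apply: mulfI; rewrite subr_eq0 eq_sym.
Qed.

Lemma in_poly_seg (P : seq ('rV[R]_n * R)) x y t :
  0 <= t <= 1 -> in_poly P x -> in_poly P y -> in_poly P (seg x y t).
Proof.
move=> /andP [t_ge0 t_le1] /allP Px /allP Py; apply/allP => h hP.
by have := Px h hP; have := Py h hP; rewrite dotv_seg /=; nra.
Qed.

(* The parameter at which the segment from y (t = 0) to x (t = 1) crosses the
   boundary hyperplane of the halfspace h (junk value 0 if it is parallel). *)
Definition seg_cross (h : 'rV[R]_n * R) x y : R :=
  (h.2 - dotv h.1 y) / (dotv h.1 x - dotv h.1 y).

Lemma in_poly_seg_between (P : seq ('rV[R]_n * R)) x y t0 t1 s :
  (forall h, h \in P -> ~ (t0 < seg_cross h x y < t1)) ->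
  t0 < s < t1 -> in_poly P (seg x y s) ->
  forall t, t0 <= t <= t1 -> in_poly P (seg x y t).
Proof.
move=> no_cross s_in /allP Ps t t_in; apply/allP => h hP.
have lin r : dotv h.1 (seg x y r) - h.2
    = (dotv h.1 y - h.2) + r * (dotv h.1 x - dotv h.1 y).
  by rewrite dotv_seg; ring.
rewrite -subr_le0 lin; apply: (@affine_nonpos_between _ _ _ t0 t1 s) t_in => //.
- by rewrite opprB; apply: no_cross.
- by rewrite -(lin s) subr_le0; apply: Ps.
Qed.

Lemma interior_seg_end (S : 'rV[R]_n -> Prop) x y : interior_of S x ->
  exists2 c, c < 1 & forall t, c <= t <= 1 -> S (seg x y t).
Proof.
move=> [e e_gt0 ball_sub].
pose M := \sum_(i < n) `|y 0 i - x 0 i|.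
have M_ge0 : 0 <= M by apply: sumr_ge0.
have le_M i : `|y 0 i - x 0 i| <= M.
  by rewrite /M (bigD1 i) //= lerDl; apply: sumr_ge0.
have step_gt0 : 0 < e / (1 + M) by rewrite divr_gt0 //; lra.
exists (1 - e / (1 + M)); first lra.
move=> t /andP [ct t_le1]; apply: ball_sub => i.
have -> : seg x y t 0 i - x 0 i = (1 - t) * (y 0 i - x 0 i).
  by rewrite /seg !mxE; ring.
rewrite normrM ger0_norm ?subr_ge0 //.
have : e / (1 + M) * M < e.
  by rewrite mulrAC ltr_pdivrMr; [nra | lra].
have := le_M i; have : 0 <= `|y 0 i - x 0 i| by [].
nra.
Qed.

End Segment.

Section SupportingPiece.
Variables (R : realFieldType) (n : nat).
Variables (Om : seq ('rV[R]_n * R)) (regions : seq (seq ('rV[R]_n * R)))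
  (pieces : seq ('rV[R]_n * R)) (ustar : 'rV[R]_n -> R).
Hypothesis size_pieces : size regions = size pieces.
Hypothesis cover : forall x, in_poly Om x ->
  exists2 k, (k < size regions)%N & in_poly (nth [::] regions k) x.
Hypothesis piecewise : forall k, (k < size regions)%N -> forall x,
  in_poly (nth [::] regions k) x -> ustar x = aff (nth (0, 0) pieces k) x.
Variables (x y : 'rV[R]_n).
Hypotheses (Om_x : in_poly Om x) (Om_y : in_poly Om y).

Definition crossings : seq R := [seq seg_cross h x y | h <- flatten regions].

Lemma seg_in_region_below lam : 0 < lam <= 1 ->
  exists p0, p0 \in 0 :: crossings /\ exists2 k, (k < size regions)%N &
    [/\ 0 <= p0 < lam &
        forall t, p0 <= t <= lam -> in_poly (nth [::] regions k) (seg x y t)].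
Proof.
move=> /andP [lam_gt0 lam_le1].
have [p0 p0_in [/andP [p0_ge0 p0_lt] max_p0]] :=
  @exists_argmax_seq _ _ R (0 :: crossings) (fun t => 0 <= t < lam) id
    (ltac:(by rewrite /= lexx lam_gt0)).
pose s := (p0 + lam) / 2.
have s_in : p0 < s < lam by apply/andP; split; rewrite /s; lra.
have [k k_lt Pk] : exists2 k, (k < size regions)%N & in_poly (nth [::] regions k) (seg x y s).
  by apply/cover/in_poly_seg => //; apply/andP; split; rewrite /s; lra.
exists p0; split=> //; exists k => //; split; first by rewrite p0_ge0.
apply: (in_poly_seg_between _ s_in Pk) => h hk /andP [p0_lt_r r_lt].
have r_in : seg_cross h x y \in 0 :: crossings.
  rewrite inE; apply/orP; right; apply/mapP; exists h => //.
  by apply/flattenP; exists (nth [::] regions k) => //; apply: mem_nth.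
have := max_p0 _ r_in; rewrite r_lt andbT (le_trans p0_ge0 (ltW p0_lt_r)) /=.
by move=> /(_ isT); rewrite leNgt p0_lt_r.
Qed.

Lemma exists_supporting_segment :
  exists lam p0, exists2 u, u \in pieces &
    [/\ [&& 0 <= p0, p0 < lam & lam <= 1],
        forall t, p0 <= t <= lam -> ustar (seg x y t) = aff u (seg x y t),
        aff u y <= ustar y & ustar x <= aff u x].
Proof.
pose slope t := (ustar (seg x y t) - ustar y) / t.
have [lam lam_in [/andP [lam_gt0 lam_le1] max_lam]] :=
  @exists_argmax_seq _ _ R (1 :: crossings) (fun t => 0 < t <= 1) slope
    (ltac:(by rewrite /= ltr01 lexx)).
have lam_range : 0 < lam <= 1 by rewrite lam_gt0.
have [p0 [p0_in [k k_lt [/andP [p0_ge0 p0_lt] seg_k]]]] := seg_in_region_below lam_range.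
pose u := nth (0, 0) pieces k.
have on_u t : p0 <= t <= lam -> ustar (seg x y t) = aff u (seg x y t).
  by move=> t_in; apply/piecewise/seg_k.
have along t : p0 <= t <= lam -> ustar (seg x y t) = t * aff u x + (1 - t) * aff u y.
  by move=> t_in; rewrite on_u // aff_seg.
have at_lam := along lam (ltac:(by rewrite lexx (ltW p0_lt))).
have u_y : aff u y <= ustar y.
  have at_p0 := along p0 (ltac:(by rewrite lexx (ltW p0_lt))).
  have [p0_0 | p0_gt0] := eqVneq p0 0.
    by move: at_p0; rewrite p0_0 seg0 => ->; lra.
  have p0_pos : 0 < p0 by rewrite lt_neqAle eq_sym p0_gt0.
  apply: (@chord_slope_le_intercept _ _ (aff u x) _ p0 lam); first by rewrite p0_pos.
  rewrite -at_lam -at_p0; apply: max_lam.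
    by move: p0_in; rewrite !inE (negPf p0_gt0) /= => ->; rewrite orbT.
  by rewrite p0_pos (le_trans (ltW p0_lt)).
exists lam, p0, u; first by apply: mem_nth; rewrite -size_pieces.
split=> //; first by rewrite p0_ge0 p0_lt lam_le1.
apply: (@chord_slope_end _ (aff u y) _ (ustar y) _ lam) => //.
rewrite -at_lam; have := max_lam 1 (mem_head _ _) (ltac:(by rewrite ltr01 lexx)).
by rewrite /slope seg1 divr1.
Qed.

Lemma exists_supporting_piece v c : c < 1 ->
  (forall t, c <= t <= 1 -> ustar (seg x y t) = aff v (seg x y t)) ->
  ustar y < aff v y ->
  exists lam, exists2 u, u \in pieces &
    [/\ 0 < lam < 1, ustar (seg x y lam) = aff u (seg x y lam),
        aff u y <= ustar y & ustar x <= aff u x].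
Proof.
move=> c_lt1 on_v v_y.
have [lam [p0 [u u_in [/and3P [p0_ge0 p0_lt lam_le1] on_u u_y u_x]]]] :=
  exists_supporting_segment.
exists lam, u => //; split=> //; last by apply: on_u; rewrite lexx (ltW p0_lt).
rewrite (le_lt_trans p0_ge0 p0_lt) lt_neqAle lam_le1 andbT /=.
apply/eqP => lam1; move: p0_lt on_u; rewrite lam1 => p0_lt1 on_u.
pose ts := Num.max c p0.
have ts_lt1 : ts < 1 by rewrite gt_max c_lt1.
have c_ts : c <= ts by rewrite le_max lexx.
have p0_ts : p0 <= ts by rewrite le_max lexx orbT.
have ts_le1 := ltW ts_lt1.
have eq_y : aff u y = aff v y.
  apply: (@aff_eq_seg _ _ u v x y ts); first by rewrite lt_eqF.
    by rewrite -on_u ?p0_ts // -on_v ?c_ts.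
  by rewrite -(seg1 x y) -on_u ?lexx ?(ltW p0_lt1) // on_v ?(ltW c_lt1) ?lexx.
by move: u_y; rewrite eq_y; lra.
Qed.

End SupportingPiece.

Theorem mainTheorem2 (R : realFieldType) (n : nat)
    (Om : seq ('rV[R]_n * R)) (regions : seq (seq ('rV[R]_n * R)))
    (pieces : seq ('rV[R]_n * R)) (ustar : 'rV[R]_n -> R)
    (Ns : nat) (xs : 'I_Ns -> 'rV[R]_n) (Gam : 'I_Ns -> seq ('rV[R]_n * R))
    (us : 'I_Ns -> 'rV[R]_n * R) (alpha beta : 'I_Ns) :
  is_PWA Om regions pieces ustar ->
  (forall i, in_poly Om (xs i)) ->
  (forall i, UO_region_with_piece regions pieces (Gam i) (us i) /\
             interior_of (in_poly (Gam i)) (xs i)) ->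
  (forall j, j \in Jge xs us alpha -> ustar (xs beta) < aff (us j) (xs beta)) ->
  ustar (xs beta) = aff (us beta) (xs beta) ->
  exists (lam : R) (xg : 'rV[R]_n) (ug : 'rV[R]_n * R),
    (0 < lam < 1) /\
    xg = lam *: xs alpha + (1 - lam) *: xs beta /\
    ug \in pieces /\
    ustar xg = aff ug xg /\
    aff (us alpha) (xs alpha) <= aff ug (xs alpha) /\
    aff ug (xs beta) <= aff (us beta) (xs beta) /\
    (let xs' := ext_fun xs xg in
     let us' := ext_fun us ug in
     exists2 j, j \in Jge xs' us' (lift ord_max alpha) &
       aff (us' j) (xs' (lift ord_max beta))
         <= aff (us' (lift ord_max beta)) (xs' (lift ord_max beta))).
Proof.
move=> [size_pieces cover _ _ piecewise] in_Om samples above_beta u_beta.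
have [[[ka [ka_lt Gam_sub us_alpha]] _] xa_interior] := samples alpha.
have [c c_lt1 near_xa] := interior_seg_end (xs beta) xa_interior.
have on_alpha t : c <= t <= 1 ->
    ustar (seg (xs alpha) (xs beta) t) = aff (us alpha) (seg (xs alpha) (xs beta) t).
  by move=> t_in; rewrite us_alpha; apply/piecewise/Gam_sub/near_xa.
have alpha_above : ustar (xs beta) < aff (us alpha) (xs beta).
  by apply: above_beta; rewrite inE lexx.
have [lam [u u_in [lam_in u_at_lam u_xb u_xa]]] :=
  exists_supporting_piece size_pieces (fun z => (cover z).1) piecewise
    (in_Om alpha) (in_Om beta) c_lt1 on_alpha alpha_above.
have u_alpha_xa : ustar (xs alpha) = aff (us alpha) (xs alpha).
  by rewrite -(seg1 (xs alpha) (xs beta)) on_alpha // (ltW c_lt1) lexx.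
exists lam, (seg (xs alpha) (xs beta) lam), u.
rewrite u_alpha_xa in u_xa; rewrite u_beta in u_xb; do 6 split=> //.
by exists ord_max; rewrite /= ?inE /ext_fun unlift_none liftK.
Qed.
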